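(* Let $G=HK$ for two normal subgroups $H$ and $K$ of the finite group $G$. Then for all $m\ge1$, $$\beta(m)\,\frac{d(H,K)}{|M(G,H,K)|}\le d^\wedge_m(H,K)\le\gamma(m)\,d(H,K),$$ where $\beta(m)=\min\{\alpha(m,i):i=1,\dots,k_K(H)\}$ and $\gamma(m)=\max\{\alpha(m,i):i=1,\dots,k_K(H)\}$.
   Context: All groups are finite; ${}^g x=gxg^{-1}$, $[x,y]=xyx^{-1}y^{-1}$. For normal subgroups $H,K$ of $G$, $H\wedge K$ is the group generated by symbols $h\wedge k$ ($h\in H,k\in K$) subject to $hh'\wedge k=({}^h h'\wedge {}^h k)(h\wedge k)$, $h\wedge kk'=(h\wedge k)({}^k h\wedge {}^k k')$, $y\wedge y=1$ for $y\in H\cap K$; $\kappa':H\wedge K\to[H,K]$, $h\wedge k\mapsto[h,k]$, is an epimorphism and $M(G,H,K):=\ker\kappa'$. For $m\ge1$, $d^\wedge_m(H,K)=|\{(h,k)\in H\times K:h^m\wedge k=1\}|/(|H||K|)$; $d(H,K)=|\{(h,k)\in H\times K:hk=kh\}|/(|H||K|)=k_K(H)/|H|$, with $k_K(H)$ the number of $K$-conjugacy classes in $H$. With representatives $h_1,\dots,h_{k_K(H)}$ of these classes, $\alpha(m,i)=|C_K(h_i^m)|/|C_K(h_i)|$. *)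

From HB Require Import structures.
From mathcomp Require Import all_boot all_order all_algebra all_fingroup.
Set Implicit Arguments. Unset Strict Implicit. Unset Printing Implicit Defensive.
Import Order.TTheory GRing.Theory Num.Theory.

(* Paper's conventions: ^g x = g x g^-1, [x,y] = x y x^-1 y^-1. *)
Definition pconj (gT : finGroupType) (g x : gT) : gT := (g * x * g^-1)%g.
Definition pcomm (gT : finGroupType) (x y : gT) : gT := (x * y * x^-1 * y^-1)%g.

(* f : H x K -> L satisfies the defining relations of the nonabelian
   exterior product H /\ K. *)
Definition ext_pairing (gT L : finGroupType) (H K : {set gT})
    (f : gT -> gT -> L) : Prop :=
  [/\ (forall h h' k, h \in H -> h' \in H -> k \in K ->
         f (h * h')%g k = (f (pconj h h') (pconj h k) * f h k)%g),
      (forall h k k', h \in H -> k \in K -> k' \in K ->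
         f h (k * k')%g = (f h k * f (pconj k h) (pconj k k'))%g) &
      (forall y, y \in H :&: K -> f y y = 1%g)].

(* (E, w) is the nonabelian exterior product H /\ K, with w h k = h /\ k:
   w satisfies the relations, its image generates E, and every pairing
   satisfying the relations factors through a homomorphism from E. *)
Definition is_ext_product (gT E : finGroupType) (H K : {set gT})
    (w : gT -> gT -> E) : Prop :=
  [/\ ext_pairing H K w,
      <<[set w h k | h in H, k in K]>>%g = [set: E] &
      forall (L : finGroupType) (f : gT -> gT -> L), ext_pairing H K f ->
        exists phi : E -> L, {morph phi : x y / (x * y)%g} /\
          (forall h k, h \in H -> k \in K -> phi (w h k) = f h k)].

Local Open Scope ring_scope.

Definition dext (gT E : finGroupType) (H K : {set gT}) (w : gT -> gT -> E)
    (m : nat) : rat :=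
  #|[set p : gT * gT | [&& p.1 \in H, p.2 \in K & w (p.1 ^+ m)%g p.2 == 1%g]]|%:R
  / (#|H| * #|K|)%:R.

Definition dcomm (gT : finGroupType) (H K : {set gT}) : rat :=
  #|[set p : gT * gT | [&& p.1 \in H, p.2 \in K & (p.1 * p.2 == p.2 * p.1)%g]]|%:R
  / (#|H| * #|K|)%:R.

Definition alpha (gT : finGroupType) (K : {group gT}) (m : nat) (x : gT) : rat :=
  #|('C_K[x ^+ m])%g|%:R / #|('C_K[x])%g|%:R.

Definition Kclasses (gT : finGroupType) (H K : {set gT}) : {set {set gT}} :=
  [set (x ^: K)%g | x in H].

(* The seed alpha m 1 = 1 is itself
   the value at the class {1}, which is one of the classes. *)
Definition beta (gT : finGroupType) (H K : {group gT}) (m : nat) : rat :=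
  \big[Num.min/alpha K m 1%g]_(C in Kclasses H K) alpha K m (repr C).
Definition gamma (gT : finGroupType) (H K : {group gT}) (m : nat) : rat :=
  \big[Num.max/alpha K m 1%g]_(C in Kclasses H K) alpha K m (repr C).

Definition Mker (gT E : finGroupType) (kappa : E -> gT) : {set E} :=
  [set e | kappa e == 1%g].

(* For h in H put T(h) = {k in K | h /\ k = 1}, so that d^wedge_m(H,K) and
   d(H,K) average |T(h^m)| and |C_K(h)| over h in H.  Since h /\ k maps to
   [h,k], T(x) lies in C_K(x); on C_K(x) the map k |-> x /\ k lands in
   M(G,H,K), and by the second exterior relation its fibres are right cosets
   of T(x).  Hence |T(x)| <= |C_K(x)| <= |M(G,H,K)| |T(x)|; taking x = h^m and
   |C_K(h^m)| = alpha(m,h) |C_K(h)|, with alpha(m,h) between beta(m) and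
   gamma(m), gives both bounds. *)
From HB Require Import structures.
From mathcomp Require Import all_boot all_order all_algebra all_fingroup.
Import Order.TTheory GRing.Theory Num.Theory.
Set Implicit Arguments. Unset Strict Implicit. Unset Printing Implicit Defensive.

Definition ext_ann (gT E : finGroupType) (K : {set gT}) (w : gT -> gT -> E)
    (x : gT) : {set gT} :=
  [set k in K | w x k == 1%g].

Lemma pcomm_eq1 (gT : finGroupType) (y k : gT) :
  (pcomm y k == 1%g) = (y * k == k * y)%g.
Proof. by rewrite /pcomm -eq_mulgV1 (canF_eq (mulgKV y)). Qed.

Section ExteriorCentralizer.

Variables (gT E : finGroupType) (H K : {group gT}).
Variables (w : gT -> gT -> E) (kappa : E -> gT).
Hypotheses (wP : ext_pairing H K w) (kappaM : {morph kappa : a b / (a * b)%g}).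
Hypothesis kappa_w : forall h k, h \in H -> k \in K -> kappa (w h k) = pcomm h k.
Variable x : gT.
Hypothesis xH : x \in H.

Let kappa1 : kappa 1%g = 1%g.
Proof. by apply: (mulgI (kappa 1%g)); rewrite -kappaM !mulg1. Qed.

Lemma ext_ann_sub_cent : ext_ann K w x \subset ('C_K[x])%g.
Proof.
apply/subsetP => k; rewrite inE => /andP[kK /eqP wxk1].
have := kappa_w xH kK; rewrite wxk1 kappa1 => /esym/eqP.
by rewrite pcomm_eq1 inE kK cent1E eq_sym.
Qed.

Lemma wedge_cent_Mker k : k \in ('C_K[x])%g -> w x k \in Mker kappa.
Proof.
by case/setIP=> kK; rewrite cent1E inE kappa_w // pcomm_eq1 eq_sym.
Qed.

(* Second exterior relation, with ^k x = x. *)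
Lemma wedge_cent_mulr k k' : k \in ('C_K[x])%g -> k' \in K ->
  w x k' = (w x k * w x (k' * k^-1))%g.
Proof.
case/setIP=> kK; rewrite cent1E => /eqP cxk k'K.
have {1}-> : k' = (k * (k^-1 * k'))%g by rewrite mulKVg.
have [_ wMr _] := wP.
rewrite wMr ?groupM ?groupV //.
by rewrite /pconj cxk mulgK mulKVg.
Qed.

Lemma card_wedge_fibre (e : E) :
  (#|[set k in ('C_K[x])%g | w x k == e]| <= #|ext_ann K w x|)%N.
Proof.
have [-> | [k0 /setIdP[k0C /eqP wk0]]] :=
  set_0Vmem [set k in ('C_K[x])%g | w x k == e]; first by rewrite cards0.
rewrite -(card_rcoset _ k0); apply/subset_leq_card/subsetP => k.
case/setIdP=> /setIP[kK _] /eqP wk; have /setIP[k0K _] := k0C.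
have := wedge_cent_mulr k0C kK; rewrite wk -wk0 => /esym/(canRL (mulKg _)).
rewrite mulVg => wk1.
by rewrite mem_rcoset inE wk1 eqxx andbT groupM ?groupV.
Qed.

Lemma card_cent1_le_Mker :
  (#|('C_K[x])%g| <= #|Mker kappa| * #|ext_ann K w x|)%N.
Proof.
rewrite -sum1_card (partition_big (w x) (mem (Mker kappa))); last first.
  by move=> k; apply: wedge_cent_Mker.
rewrite -sum_nat_const leq_sum // => e _.
apply: leq_trans (card_wedge_fibre e); rewrite sum1_card.
by apply/eq_leq/eq_card => k; rewrite inE.
Qed.

End ExteriorCentralizer.

Lemma card_pairs_sum (T : finType) (A B : {set T}) (R : T -> T -> bool) :
  #|[set p : T * T | [&& p.1 \in A, p.2 \in B & R p.1 p.2]]| =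
  (\sum_(a in A) #|[set b in B | R a b]|)%N.
Proof.
rewrite (eq_bigr (fun a => \sum_(b | (b \in B) && R a b) 1)%N); last first.
  by move=> a _; rewrite -sum1_card; apply: eq_bigl => b; rewrite inE.
by rewrite pair_big_dep -sum1_card; apply: eq_bigl => p; rewrite inE.
Qed.

Local Open Scope ring_scope.

Lemma dcomm_sum (gT : finGroupType) (H K : {group gT}) :
  dcomm H K = (\sum_(h in H) #|('C_K[h])%g|%:R) / (#|H| * #|K|)%:R.
Proof.
rewrite /dcomm (card_pairs_sum H K (fun h k => h * k == k * h)%g) natr_sum.
congr (_ / _); apply: eq_bigr => h _.
by congr _%:R; apply: eq_card => k; rewrite in_setI cent1E inE eq_sym.
Qed.

Lemma dext_sum (gT E : finGroupType) (H K : {group gT}) (w : gT -> gT -> E) m :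
  dext H K w m = (\sum_(h in H) #|ext_ann K w (h ^+ m)%g|%:R) / (#|H| * #|K|)%:R.
Proof.
by rewrite /dext (card_pairs_sum H K (fun h k => w (h ^+ m)%g k == 1%g)) natr_sum.
Qed.

Section Alpha.

Variables (gT : finGroupType) (H K : {group gT}) (m : nat).

Lemma card_cent1J x k : k \in K -> #|('C_K[x ^ k])%g| = #|('C_K[x])%g|.
Proof. by move=> kK; rewrite cent1J -{1}(conjGid kK) -conjIg cardJg. Qed.

Lemma alpha_cent1 x : alpha K m x * #|('C_K[x])%g|%:R = #|('C_K[x ^+ m])%g|%:R.
Proof. by rewrite /alpha mulfVK // pnatr_eq0 -lt0n cardG_gt0. Qed.

Lemma alpha_repr_class h : alpha K m (repr (h ^: K)%g) = alpha K m h.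
Proof.
have /imsetP[k kK ->] : repr (h ^: K)%g \in (h ^: K)%g by apply/mem_repr/class_refl.
by rewrite /alpha -conjXg !card_cent1J.
Qed.

Lemma beta_le_alpha h : h \in H -> beta H K m <= alpha K m h.
Proof.
move=> hH; rewrite -alpha_repr_class.
by apply: (@bigmin_le_cond _ _ _ _ (h ^: K)%g); apply: imset_f.
Qed.

Lemma alpha_le_gamma h : h \in H -> alpha K m h <= gamma H K m.
Proof.
move=> hH; rewrite -alpha_repr_class.
by apply: (@le_bigmax_cond _ _ _ _ (h ^: K)%g); apply: imset_f.
Qed.

End Alpha.

Theorem mainTheorem7 (gT : finGroupType) (G H K : {group gT})
    (E : finGroupType) (w : gT -> gT -> E) (kappa : E -> gT) (m : nat) :
  (H <| G)%g -> (K <| G)%g -> (G : {set gT}) = (H * K)%g ->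
  is_ext_product H K w ->
  {morph kappa : x y / (x * y)%g} ->
  (forall h k, h \in H -> k \in K -> kappa (w h k) = pcomm h k) ->
  (1 <= m)%N ->
  beta H K m * dcomm H K / #|Mker kappa|%:R <= dext H K w m
  /\ dext H K w m <= gamma H K m * dcomm H K.
Proof.
move=> _ _ _ [wP _ _] kappaM kappa_w _.
have Mker_gt0 : 0 < #|Mker kappa|%:R :> rat.
  by rewrite ltr0n card_gt0; apply/set0Pn; exists (w 1 1)%g;
     rewrite inE kappa_w // pcomm_eq1.
rewrite dcomm_sum dext_sum !mulrA; split.
- rewrite mulrAC ler_wpM2r ?invr_ge0 // ler_pdivrMr // mulr_sumr mulr_suml.
  apply: ler_sum => h hH; apply: (@le_trans _ _ #|('C_K[h ^+ m])%g|%:R).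
  + by rewrite -alpha_cent1 ler_wpM2r ?beta_le_alpha.
  + by rewrite -natrM mulnC ler_nat (card_cent1_le_Mker wP kappa_w) ?groupX.
- rewrite ler_wpM2r ?invr_ge0 // mulr_sumr; apply: ler_sum => h hH.
  apply: (@le_trans _ _ #|('C_K[h ^+ m])%g|%:R).
  + by rewrite ler_nat subset_leq_card // (ext_ann_sub_cent kappaM kappa_w) ?groupX.
  + by rewrite -alpha_cent1 ler_wpM2r ?alpha_le_gamma.
Qed.
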